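(* The map $\mathcal L:\mathcal X_M\to\mathcal X_\Lambda$, $\mathcal L(f)(\theta)=\log f(\theta)$ (with $\log\infty=\infty$), is continuous when both spaces carry $\tau_{AW}$.
   Context: For a probability measure $\nu$ let $f_\nu(\theta)=\int e^{\theta x}\nu(dx)\in(0,\infty]$. For $f:\mathbb R\to[-\infty,\infty]$, $\mathrm{epi}(f)=\{(\theta,b):b\ge f(\theta)\}$. On $\mathbb R^2$ use the box metric $d(x,y)=\max(|x_1-y_1|,|x_2-y_2|)$, $d(x,A)=\inf_{y\in A}d(x,y)$, $\overline B_k=\{x:d(0,x)\le k\}$. The Attouch–Wets topology $\tau_{AW}$ has local base at $f$ given by $V_k(f)=\{g:\sup_{x\in\overline B_k}|d(x,\mathrm{epi}(g))-d(x,\mathrm{epi}(f))|<1/k\}$, $k\in\mathbb N$. $\mathcal X_M$ = lower semicontinuous convex $f:\mathbb R\to(0,\infty]$ with $f(0)<\infty$ for which some probability measure $\nu$ satisfies $f(\theta)=f_\nu(\theta)$ whenever $f(\theta)<\infty$; $\mathcal X_\Lambda=\{\log g:g\in\mathcal X_M\}$. *)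

From Stdlib Require Import Reals List Classical ClassicalEpsilon.
Open Scope R_scope.

(* Extended reals (-oo is never needed: all functions here take values in
   (-oo, +oo]). *)
Inductive Rbarp := Fin (r : R) | PInf.

(* Inf / sup of a set of reals (classical choice; junk value 0 if none). *)
Definition is_glb (P : R -> Prop) (m : R) : Prop :=
  (forall x, P x -> m <= x) /\ (forall b, (forall x, P x -> b <= x) -> b <= m).

Definition Rinf (P : R -> Prop) : R :=
  match excluded_middle_informative (exists m, is_glb P m) with
  | left h => proj1_sig (constructive_indefinite_description _ h)
  | right _ => 0
  end.

Definition Rsup (P : R -> Prop) : R :=
  match excluded_middle_informative (exists m, is_lub P m) with
  | left h => proj1_sig (constructive_indefinite_description _ h)
  | right _ => 0
  end.

Inductive borel : (R -> Prop) -> Prop :=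
| borel_halfline (a : R) : borel (fun x => x <= a)
| borel_compl (A : R -> Prop) : borel A -> borel (fun x => ~ A x)
| borel_union (A : nat -> R -> Prop) :
    (forall n, borel (A n)) -> borel (fun x => exists n, A n x)
| borel_ext (A B : R -> Prop) : borel A -> (forall x, A x <-> B x) -> borel B.

Record prob_measure := {
  pm :> (R -> Prop) -> R;
  pm_nonneg : forall A, borel A -> 0 <= pm A;
  pm_total : pm (fun _ => True) = 1;
  pm_sigma : forall A : nat -> R -> Prop,
      (forall n, borel (A n)) ->
      (forall n m, n <> m -> forall x, A n x -> A m x -> False) ->
      infinite_sum (fun n => pm (A n)) (pm (fun x => exists n, A n x))
}.

Definition simple_eval (s : list (R * (R -> Prop))) (x : R) : R :=
  fold_right (fun p acc =>
    (if excluded_middle_informative (snd p x) then fst p else 0) + acc) 0 s.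

Definition simple_integral (nu : prob_measure) (s : list (R * (R -> Prop))) : R :=
  fold_right (fun p acc => fst p * nu (snd p) + acc) 0 s.

Definition simple_below (g : R -> R) (s : list (R * (R -> Prop))) : Prop :=
  Forall (fun p => 0 <= fst p /\ borel (snd p)) s /\
  forall x, simple_eval s x <= g x.

Definition integral (nu : prob_measure) (g : R -> R) : Rbarp :=
  let S := fun r => exists s, simple_below g s /\ r = simple_integral nu s in
  match excluded_middle_informative (exists M, forall r, S r -> r <= M) with
  | left _ => Fin (Rsup S)
  | right _ => PInf
  end.

Definition mgf (nu : prob_measure) (theta : R) : Rbarp :=
  integral nu (fun x => exp (theta * x)).

Definition lt_ER (a : R) (v : Rbarp) : Prop :=
  match v with Fin r => a < r | PInf => True end.

Definition lsc (f : R -> Rbarp) : Prop :=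
  forall theta a, lt_ER a (f theta) ->
    exists delta, 0 < delta /\
      forall theta', Rabs (theta' - theta) < delta -> lt_ER a (f theta').

Definition convexf (f : R -> Rbarp) : Prop :=
  forall x y t a b, 0 < t < 1 -> f x = Fin a -> f y = Fin b ->
    exists c, f (t * x + (1 - t) * y) = Fin c /\ c <= t * a + (1 - t) * b.

Definition XM (f : R -> Rbarp) : Prop :=
  lsc f /\ convexf f /\
  (forall theta r, f theta = Fin r -> 0 < r) /\
  (exists r, f 0 = Fin r) /\
  (exists nu : prob_measure, forall theta r, f theta = Fin r -> mgf nu theta = Fin r).

Definition Llog (f : R -> Rbarp) : R -> Rbarp :=
  fun theta => match f theta with Fin r => Fin (ln r) | PInf => PInf end.

Definition XLambda (h : R -> Rbarp) : Prop := exists g, XM g /\ h = Llog g.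

Definition dbox (x y : R * R) : R :=
  Rmax (Rabs (fst x - fst y)) (Rabs (snd x - snd y)).

Definition epi (f : R -> Rbarp) (p : R * R) : Prop :=
  match f (fst p) with Fin r => r <= snd p | PInf => False end.

Definition dist_set (x : R * R) (A : R * R -> Prop) : R :=
  Rinf (fun r => exists y, A y /\ r = dbox x y).

Definition closed_ball (k : nat) (x : R * R) : Prop := dbox (0, 0) x <= INR k.

(* V_k(f) for k in N = {1,2,...} *)
Definition AW_nbhd (k : nat) (f g : R -> Rbarp) : Prop :=
  Rsup (fun r => exists x, closed_ball k x /\
          r = Rabs (dist_set x (epi g) - dist_set x (epi f))) < 1 / INR k.

From Stdlib Require Import Reals Lra Lia Classical ClassicalEpsilon.
Open Scope R_scope.

(* A neighbourhood V_k'(f) says that on the ball of radius k' every point of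
   epi f is 1/k'-close to epi g and vice versa; conversely such two-sided
   excess bounds on a ball that is large compared with k (and with a fixed
   point of epi f) bound |d(x, epi g) - d(x, epi f)| on the ball of radius k.
   The epigraph of log f is the image of epi f under (t, b) |-> (t, log b),
   and on heights in [e^-R, oo) the logarithm is Lipschitz with constant e^R;
   so excess bounds for f, g at radius max(R, e^R) pass to log f, log g at
   radius R, with the error multiplied by 1 + e^R. *)

Lemma exists_nat_ge (x : R) : exists n : nat, (1 <= n)%nat /\ x <= INR n.
Proof.
  destruct (INR_unbounded (Rmax x 1)) as [n Hn].
  assert (Hx := Rmax_l x 1). assert (H1 := Rmax_r x 1).
  exists n; split; [|lra].
  destruct n; [simpl in Hn; lra | lia].
Qed.

Lemma exp_le_mono x y : x <= y -> exp x <= exp y.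
Proof. intros [H|H]; [left; apply exp_increasing; exact H | subst; lra]. Qed.

Lemma ln_le_mono x y : 0 < x -> x <= y -> ln x <= ln y.
Proof. intros Hx [H|H]; [left; apply ln_increasing; auto | subst; lra]. Qed.

Lemma Rabs_le_inv x y : Rabs x <= y -> -y <= x <= y.
Proof. unfold Rabs; destruct Rcase_abs; intros; lra. Qed.

Lemma Rabs_sub_le_add a b : 0 <= a -> 0 <= b -> Rabs (a - b) <= a + b.
Proof. intros; apply Rabs_le; lra. Qed.

Lemma Rinf_glb (P : R -> Prop) :
  (exists x, P x) -> (forall x, P x -> 0 <= x) -> is_glb P (Rinf P).
Proof.
  intros [x0 Hx0] Hpos.
  assert (Hex : exists m, is_glb P m).
  { set (L := fun b => forall x, P x -> b <= x).
    destruct (completeness L) as [m [Hm1 Hm2]].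
    - exists x0; intros b Hb; apply Hb; exact Hx0.
    - exists 0; intros x Hx; auto.
    - exists m; split.
      + intros x Hx. apply Hm2. intros b Hb. apply Hb; exact Hx.
      + intros b Hb. apply Hm1. exact Hb. }
  unfold Rinf. destruct excluded_middle_informative as [h|h]; [|contradiction].
  destruct constructive_indefinite_description; assumption.
Qed.

Lemma Rsup_lub (P : R -> Prop) :
  (exists x, P x) -> (exists M, forall x, P x -> x <= M) -> is_lub P (Rsup P).
Proof.
  intros Hne [M HM].
  assert (Hex : exists m, is_lub P m).
  { destruct (completeness P) as [m Hm]; [exists M; exact HM | exact Hne | eauto]. }
  unfold Rsup. destruct excluded_middle_informative as [h|h]; [|contradiction].
  destruct constructive_indefinite_description; assumption.
Qed.

Lemma dbox_ge0 x y : 0 <= dbox x y.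
Proof. unfold dbox. eapply Rle_trans; [apply Rabs_pos | apply Rmax_l]. Qed.

Lemma dbox_refl x : dbox x x = 0.
Proof. unfold dbox. rewrite !Rminus_diag, Rabs_R0. apply Rmax_left; lra. Qed.

Lemma dbox_sym x y : dbox x y = dbox y x.
Proof. unfold dbox. rewrite (Rabs_minus_sym (fst x)), (Rabs_minus_sym (snd x)). reflexivity. Qed.

Lemma dbox_fst x y : Rabs (fst x - fst y) <= dbox x y.
Proof. apply Rmax_l. Qed.

Lemma dbox_snd x y : Rabs (snd x - snd y) <= dbox x y.
Proof. apply Rmax_r. Qed.

Lemma dbox_triangle x y z : dbox x z <= dbox x y + dbox y z.
Proof.
  unfold dbox. apply Rmax_lub.
  - replace (fst x - fst z) with ((fst x - fst y) + (fst y - fst z)) by ring.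
    eapply Rle_trans; [apply Rabs_triang | apply Rplus_le_compat; apply Rmax_l].
  - replace (snd x - snd z) with ((snd x - snd y) + (snd y - snd z)) by ring.
    eapply Rle_trans; [apply Rabs_triang | apply Rplus_le_compat; apply Rmax_r].
Qed.

Lemma dist_set_glb x A : (exists y, A y) ->
  is_glb (fun r => exists y, A y /\ r = dbox x y) (dist_set x A).
Proof.
  intros [y Hy]. apply Rinf_glb.
  - exists (dbox x y); eauto.
  - intros r [z [_ ->]]; apply dbox_ge0.
Qed.

Lemma dist_set_le x A y : A y -> dist_set x A <= dbox x y.
Proof. intros Hy. apply (proj1 (dist_set_glb x A (ex_intro _ y Hy))); eauto. Qed.

Lemma dist_set_ge0 x A : (exists y, A y) -> 0 <= dist_set x A.
Proof.
  intros Hne. apply (proj2 (dist_set_glb x A Hne)).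
  intros r [z [_ ->]]; apply dbox_ge0.
Qed.

Lemma dist_set_lt x A c : (exists y, A y) -> dist_set x A < c ->
  exists y, A y /\ dbox x y < c.
Proof.
  intros Hne Hlt. apply NNPP. intro Hn.
  assert (c <= dist_set x A); [|lra].
  apply (proj2 (dist_set_glb x A Hne)). intros r [z [Hz ->]].
  apply Rnot_lt_le. intro Hc. apply Hn. eauto.
Qed.

Lemma dist_set_in x A : A x -> dist_set x A = 0.
Proof.
  intros Hx. apply Rle_antisym.
  - rewrite <- (dbox_refl x). apply dist_set_le; exact Hx.
  - apply dist_set_ge0; eauto.
Qed.

Definition excess (A B : R * R -> Prop) (r e : R) : Prop :=
  forall p, A p -> dbox (0, 0) p <= r -> exists q, B q /\ dbox p q < e.

Lemma excess_le_radius A B r1 r2 e : r1 <= r2 -> excess A B r2 e -> excess A B r1 e.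
Proof. intros Hr H p Hp Hb. apply H; [exact Hp | lra]. Qed.

(* A point of A almost realising d(x, A) lies in the ball of radius r. *)
Lemma dist_set_le_excess A B r e k y0 x :
  A y0 -> excess A B r e -> 2 * k + dbox (0, 0) y0 + 1 <= r ->
  dbox (0, 0) x <= k -> dist_set x B <= dist_set x A + e.
Proof.
  intros Hy0 Hexc Hr Hx. apply Rle_plus_epsilon. intros eps Heps.
  assert (Heta : 0 < Rmin eps 1) by (apply Rmin_glb_lt; lra).
  assert (Heta1 := Rmin_l eps 1). assert (Heta2 := Rmin_r eps 1).
  destruct (dist_set_lt x A (dist_set x A + Rmin eps 1)) as [y [Hy Hxy]]; [eauto | lra |].
  assert (HdA : dist_set x A <= k + dbox (0, 0) y0).
  { apply Rle_trans with (dbox x y0); [apply dist_set_le; exact Hy0|].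
    pose proof (dbox_triangle x (0, 0) y0). rewrite (dbox_sym x (0, 0)) in H. lra. }
  destruct (Hexc y Hy) as [q [Hq Hyq]].
  { pose proof (dbox_triangle (0, 0) x y). lra. }
  pose proof (dist_set_le x B q Hq). pose proof (dbox_triangle x y q). lra.
Qed.

Lemma dist_set_diff_le_excess A B r e k y0 :
  A y0 -> excess A B r e -> excess B A r e -> 0 < e <= 1 ->
  2 * k + dbox (0, 0) y0 + 2 <= r ->
  forall x, dbox (0, 0) x <= k -> Rabs (dist_set x B - dist_set x A) <= e.
Proof.
  intros Hy0 HAB HBA He Hr x Hx.
  destruct (HAB y0 Hy0) as [q0 [Hq0 Hyq]].
  { pose proof (dbox_ge0 (0, 0) x). lra. }
  pose proof (dbox_triangle (0, 0) y0 q0).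
  pose proof (dist_set_le_excess A B r e k y0 x Hy0 HAB ltac:(lra) Hx).
  pose proof (dist_set_le_excess B A r e k q0 x Hq0 HBA ltac:(lra) Hx).
  apply Rabs_le; lra.
Qed.

Lemma AW_nbhd_dist_set_lt k f g yf yg : epi f yf -> epi g yg -> AW_nbhd k f g ->
  forall x, closed_ball k x ->
  Rabs (dist_set x (epi g) - dist_set x (epi f)) < 1 / INR k.
Proof.
  intros Hf Hg HAW x Hx. unfold AW_nbhd in HAW.
  match type of HAW with Rsup ?S < _ => set (P := S) in HAW end.
  assert (HP : is_lub P (Rsup P)).
  { apply Rsup_lub.
    - eexists; exists (0, 0); split; [|reflexivity].
      unfold closed_ball. rewrite dbox_refl. apply pos_INR.
    - exists (2 * INR k + dbox (0, 0) yf + dbox (0, 0) yg).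
      intros r [z [Hz ->]]. unfold closed_ball in Hz.
      eapply Rle_trans; [apply Rabs_sub_le_add; apply dist_set_ge0; eauto|].
      pose proof (dist_set_le z _ _ Hf). pose proof (dist_set_le z _ _ Hg).
      pose proof (dbox_triangle z (0, 0) yf). pose proof (dbox_triangle z (0, 0) yg).
      rewrite (dbox_sym z (0, 0)) in *. lra. }
  assert (Rabs (dist_set x (epi g) - dist_set x (epi f)) <= Rsup P)
    by (apply (proj1 HP); exists x; auto).
  lra.
Qed.

Lemma AW_nbhd_excess k f g yf yg : epi f yf -> epi g yg -> AW_nbhd k f g ->
  excess (epi f) (epi g) (INR k) (1 / INR k) /\
  excess (epi g) (epi f) (INR k) (1 / INR k).
Proof.
  intros Hf Hg HAW. split; intros p Hp Hb;
    pose proof (AW_nbhd_dist_set_lt k f g yf yg Hf Hg HAW p Hb) as H;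
    apply dist_set_lt; eauto.
  - rewrite (dist_set_in p (epi f)), Rminus_0_r in H by exact Hp.
    eapply Rle_lt_trans; [apply Rle_abs | exact H].
  - rewrite (dist_set_in p (epi g)), Rminus_0_l, Rabs_Ropp in H by exact Hp.
    eapply Rle_lt_trans; [apply Rle_abs | exact H].
Qed.

Lemma AW_nbhd_of_dist_set_le k f g e :
  (forall x, closed_ball k x ->
     Rabs (dist_set x (epi g) - dist_set x (epi f)) <= e) ->
  e < 1 / INR k -> AW_nbhd k f g.
Proof.
  intros Hb He. unfold AW_nbhd.
  match goal with |- Rsup ?S < _ => set (P := S) end.
  assert (HP : is_lub P (Rsup P)).
  { apply Rsup_lub.
    - eexists; exists (0, 0); split; [|reflexivity].
      unfold closed_ball. rewrite dbox_refl. apply pos_INR.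
    - exists e. intros r [x [Hx ->]]. apply Hb; exact Hx. }
  assert (Rsup P <= e) by (apply (proj2 HP); intros r [x [Hx ->]]; apply Hb; exact Hx).
  lra.
Qed.

Definition pos_valued (f : R -> Rbarp) : Prop := forall t r, f t = Fin r -> 0 < r.

Lemma epi_Llog f t s : pos_valued f -> epi (Llog f) (t, s) <-> epi f (t, exp s).
Proof.
  intros Hp. unfold epi, Llog; simpl.
  destruct (f t) as [r|] eqn:E; [|tauto].
  pose proof (Hp t r E). split; intros Hle.
  - rewrite <- (exp_ln r) by assumption. apply exp_le_mono; exact Hle.
  - rewrite <- (ln_exp s). apply ln_le_mono; assumption.
Qed.

Lemma epi_le_snd f t b b' : epi f (t, b) -> b <= b' -> epi f (t, b').
Proof. unfold epi; simpl. destruct (f t); [lra | tauto]. Qed.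

Lemma ln_exp_add_lt s d : 0 < d -> s < ln (exp s + d) < s + d * exp (- s).
Proof.
  intros Hd. assert (Hes := exp_pos s).
  assert (Hinv : exp s * exp (- s) = 1) by (rewrite exp_Ropp; field; lra).
  assert (Hx : 0 < d * exp (- s)) by (apply Rmult_lt_0_compat; [lra | apply exp_pos]).
  split.
  - rewrite <- (ln_exp s) at 1. apply ln_increasing; lra.
  - rewrite <- (ln_exp (s + d * exp (- s))). apply ln_increasing; [lra|].
    rewrite exp_plus. pose proof (exp_ineq1 (d * exp (- s)) ltac:(lra)). nra.
Qed.

Lemma excess_Llog f g r d : pos_valued f -> pos_valued g -> 0 < d -> 0 <= r ->
  excess (epi f) (epi g) (Rmax r (exp r)) d ->
  excess (epi (Llog f)) (epi (Llog g)) r (d * (1 + exp r)).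
Proof.
  intros Hf Hg Hd Hr Hexc [t s] Hp Hb.
  apply epi_Llog in Hp; [|exact Hf].
  assert (Ht := dbox_fst (0, 0) (t, s)). assert (Hs := dbox_snd (0, 0) (t, s)).
  simpl in Ht, Hs. rewrite Rminus_0_l, Rabs_Ropp in Ht, Hs.
  apply Rabs_le_inv in Hs.
  assert (Hmax := Rmax_l r (exp r)). assert (Hmax' := Rmax_r r (exp r)).
  assert (Hexp : exp (- s) <= exp r) by (apply exp_le_mono; lra).
  destruct (Hexc (t, exp s) Hp) as [[t' b'] [Hq Hd']].
  { unfold dbox; simpl. rewrite !Rminus_0_l, !Rabs_Ropp, (Rabs_right (exp s))
      by (left; apply exp_pos).
    apply Rmax_lub; [lra|]. apply Rle_trans with (exp r); [apply exp_le_mono|]; lra. }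
  assert (H1 := dbox_fst (t, exp s) (t', b')). assert (H2 := dbox_snd (t, exp s) (t', b')).
  simpl in H1, H2. apply Rabs_le_inv in H2.
  exists (t', ln (exp s + d)). split.
  - apply epi_Llog; [exact Hg|]. rewrite exp_ln by (pose proof (exp_pos s); lra).
    apply epi_le_snd with b'; [exact Hq | lra].
  - destruct (ln_exp_add_lt s d Hd) as [Hlo Hhi].
    assert (HeR := exp_pos r).
    assert (d * exp (- s) <= d * exp r) by (apply Rmult_le_compat_l; lra).
    unfold dbox; simpl. apply Rmax_lub_lt; [nra|].
    rewrite Rabs_left by lra. nra.
Qed.

Lemma XM_pos_valued f : XM f -> pos_valued f.
Proof. intros (_ & _ & H & _). exact H. Qed.

Lemma XM_epi_nonempty f : XM f -> exists y, epi f y.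
Proof. intros (_ & _ & _ & [r Hr] & _). exists (0, r). unfold epi; simpl. rewrite Hr. lra. Qed.

Lemma XM_epi_Llog_nonempty f : XM f -> exists y, epi (Llog f) y.
Proof.
  intros Hf. destruct (XM_epi_nonempty f Hf) as [[t b] Hy].
  assert (Hpos : 0 < b).
  { unfold epi in Hy; simpl in Hy. destruct (f t) as [r|] eqn:E; [|contradiction].
    pose proof (XM_pos_valued f Hf t r E). lra. }
  exists (t, ln b). apply epi_Llog; [apply XM_pos_valued; exact Hf|].
  rewrite exp_ln; assumption.
Qed.

Lemma inv_mul_le_half k a c : 1 <= k -> 0 < c -> 2 * k * c <= a ->
  1 / a * c < 1 / k /\ 0 < 1 / a * c <= 1.
Proof.
  intros Hk Hc Ha. assert (Hapos : 0 < a) by nra.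
  assert (Hle : 1 / a * c <= 1 / (2 * k)).
  { apply Rmult_le_reg_l with (2 * k * a); [nra|]. field_simplify; lra. }
  assert (1 / (2 * k) <= 1 / 2) by (apply Rmult_le_reg_l with (2 * k); [lra|]; field_simplify; lra).
  assert (1 / (2 * k) < 1 / k) by (apply Rmult_lt_reg_l with (2 * k); [lra|]; field_simplify; lra).
  assert (0 < 1 / a * c) by (apply Rmult_lt_0_compat; [apply Rdiv_lt_0_compat|]; lra).
  split; lra.
Qed.

Theorem mainTheorem10 :
  forall f : R -> Rbarp, XM f ->
  forall k : nat, (1 <= k)%nat ->
  exists k' : nat, (1 <= k')%nat /\
    forall g : R -> Rbarp, XM g -> AW_nbhd k' f g ->
      AW_nbhd k (Llog f) (Llog g).
Proof.
  intros f Hf k Hk.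
  assert (HkR : 1 <= INR k) by (apply (le_INR 1); exact Hk).
  destruct (XM_epi_Llog_nonempty f Hf) as [y0 Hy0].
  set (r := 2 * INR k + dbox (0, 0) y0 + 2).
  assert (Hr : 0 <= r) by (pose proof (dbox_ge0 (0, 0) y0); unfold r; lra).
  set (c := 1 + exp r).
  assert (Hc : 0 < c) by (pose proof (exp_pos r); unfold c; lra).
  destruct (exists_nat_ge (Rmax r (exp r) + 2 * INR k * c)) as [k' [Hk' Hk'R]].
  assert (Hk'1 : 1 <= INR k') by (apply (le_INR 1); exact Hk').
  assert (Hrad : Rmax r (exp r) <= INR k') by (pose proof (Rmax_l r (exp r)); nra).
  destruct (inv_mul_le_half (INR k) (INR k') c HkR Hc) as [He He1];
    [pose proof (Rmax_l r (exp r)); lra|].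
  exists k'; split; [exact Hk'|]. intros g Hg HAW.
  destruct (XM_epi_nonempty f Hf) as [yf Hyf]. destruct (XM_epi_nonempty g Hg) as [yg Hyg].
  destruct (AW_nbhd_excess k' f g yf yg Hyf Hyg HAW) as [Efg Egf].
  assert (Hd : 0 < 1 / INR k') by (apply Rdiv_lt_0_compat; lra).
  pose proof (excess_Llog f g r _ (XM_pos_valued f Hf) (XM_pos_valued g Hg) Hd Hr
                (excess_le_radius _ _ _ _ _ Hrad Efg)) as Lfg.
  pose proof (excess_Llog g f r _ (XM_pos_valued g Hg) (XM_pos_valued f Hf) Hd Hr
                (excess_le_radius _ _ _ _ _ Hrad Egf)) as Lgf.
  fold c in Lfg, Lgf.
  apply AW_nbhd_of_dist_set_le with (1 / INR k' * c); [|exact He].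
  apply (dist_set_diff_le_excess _ _ r _ (INR k) y0 Hy0 Lfg Lgf He1).
  unfold r; lra.
Qed.
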